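(* Let $\mathcal P\subset\mathbb R^d$ be compact, $\{p_i\}_{i=1}^K\subset\mathcal P$ anchors with fill distance $h_K:=\sup_{p\in\mathcal P}\min_i\|p-p_i\|$, and $i(p)\in\arg\min_i\|p-p_i\|$. Fix $(z,t)$. Assume: (i) there is $L<\infty$ with $\|f^\star(z',p,t')-f^\star(z',p',t')\|\le L\|p-p'\|$ for all $z',t'$ and $p,p'\in\mathcal P$; (ii) $\hat f(z,p,t)=\hat f(z,p_{i(p)},t)$ for all $p\in\mathcal P$; (iii) for each anchor we observe $y_{ij}=f^\star(z,p_i,t)+\varepsilon_{ij}$, $j=1,\dots,n_i$, with $\varepsilon_{ij}\in\mathbb R^m$ independent, mean-zero, and coordinate-wise $\sigma_i$-sub-Gaussian, and $\hat f(z,p_i,t)=\frac1{n_i}\sum_j y_{ij}$. Let $n_{\min}=\min_i n_i$ and $\sigma_{\max}=\max_i\sigma_i$. Then for any $\delta\in(0,1)$, with probability at least $1-\delta$, $$\sup_{p\in\mathcal P}\|\hat f(z,p,t)-f^\star(z,p,t)\|_2\le\sigma_{\max}\sqrt{\frac{2m\log(2mK/\delta)}{n_{\min}}}+Lh_K.$$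
   Context: A real random variable $X$ is $\sigma$-sub-Gaussian if $\mathbb E[e^{\lambda X}]\le e^{\sigma^2\lambda^2/2}$ for all $\lambda\in\mathbb R$. In (i) the norm on the left is the Euclidean norm on $\mathbb R^m$. *)

From HB Require Import structures.
From mathcomp Require Import all_boot all_order all_algebra.
From mathcomp Require Import all_classical all_reals all_analysis.
Set Implicit Arguments. Unset Strict Implicit. Unset Printing Implicit Defensive.
Import Order.TTheory GRing.Theory Num.Theory.
Import numFieldNormedType.Exports.
Local Open Scope classical_set_scope.
Local Open Scope ring_scope.

Definition enorm (R : realType) (k : nat) (v : 'rV[R]_k) : R :=
  Num.sqrt (\sum_(i < k) (v ord0 i) ^+ 2).

(* A row vector viewed as an m-tuple (m.-tuple R carries the product
   sigma-algebra of the Borel sigma-algebras). *)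
Definition tuple_of_row (R : realType) (k : nat) (v : 'rV[R]_k) : k.-tuple R :=
  [tuple v ord0 i | i < k].

Definition mutually_independent (dom : measure_display) (Omega : measurableType dom)
  (R : realType) (P : probability Omega R) (I : finType) (k : nat)
  (X : I -> Omega -> 'rV[R]_k) : Prop :=
  forall (J : {set I}) (B : I -> set (k.-tuple R)),
    (forall a, measurable (B a)) ->
    P (\big[setI/setT]_(a in J) ((fun w => tuple_of_row (X a w)) @^-1` B a)) =
    (\prod_(a in J) P ((fun w => tuple_of_row (X a w)) @^-1` B a))%E.

Definition mean_zero (dom : measure_display) (Omega : measurableType dom)
  (R : realType) (P : probability Omega R) (X : Omega -> R) : Prop :=
  P.-integrable setT (EFin \o X) /\ (\int[P]_w (X w)%:E = 0)%E.

Definition sub_gaussian (dom : measure_display) (Omega : measurableType dom)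
  (R : realType) (P : probability Omega R) (sigma : R) (X : Omega -> R) : Prop :=
  forall lam : R,
    (\int[P]_w (expR (lam * X w))%:E <= (expR (sigma ^+ 2 * lam ^+ 2 / 2))%:E)%E.

Definition fill_distance (R : realType) (d K : nat) (Pset : set 'rV[R]_d)
  (anc : 'I_K -> 'rV[R]_d) : R :=
  sup [set inf [set enorm (p - anc i) | i in [set: 'I_K]] | p in Pset].

(* n_min = min_i n_i (for K >= 1) and sigma_max = max_i sigma_i (sigma_i >= 0). *)
Definition nmin (K : nat) (n : 'I_K -> nat) : nat :=
  \big[minn/(\max_(i < K) n i)%N]_(i < K) n i.
Definition sigma_max (R : realType) (K : nat) (sigma : 'I_K -> R) : R :=
  \big[Order.max/0%R]_(i < K) sigma i.

(* On the event where, for every anchor i and coordinate k, the noise average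
   (1/n_i) sum_j eps_ij,k is at most c := sigma_max sqrt(2 ln(2mK/delta)/n_min)
   in absolute value, the error at p splits through its nearest anchor
   p_i(p): the estimation error at the anchor has Euclidean norm at most
   sqrt(m) c, and the bias |f*(p_i(p)) - f*(p)| is at most L |p - p_i(p)|
   <= L h_K.  Each noise sum is a sum of n_i independent sigma_i-sub-Gaussian
   variables: independence factorises its moment generating function, so
   Chernoff's bound makes each of the 2mK one-sided deviations an event of
   probability at most delta/(2mK), and a union bound concludes. *)

From HB Require Import structures.
From mathcomp Require Import all_boot all_order all_algebra.
From mathcomp Require Import all_classical all_reals all_analysis.
From mathcomp Require Import measurable_realfun ring lra.
Set Implicit Arguments.
Unset Strict Implicit.
Unset Printing Implicit Defensive.

Import Order.TTheory GRing.Theory Num.Theory.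
Import numFieldNormedType.Exports.
Local Open Scope classical_set_scope.
Local Open Scope ring_scope.

Section euclidean_norm.
Variable R : realType.

Lemma sum_sqr_ge0 k (u : 'I_k -> R) : 0 <= \sum_(i < k) u i ^+ 2.
Proof. by apply: sumr_ge0 => i _; exact: sqr_ge0. Qed.

Lemma cauchy_schwarz_sum k (u v : 'I_k -> R) :
  (\sum_(i < k) u i * v i) ^+ 2 <= (\sum_(i < k) u i ^+ 2) * (\sum_(i < k) v i ^+ 2).
Proof.
set A := \sum_(i < k) u i ^+ 2; set B := \sum_(i < k) v i ^+ 2.
set C := \sum_(i < k) u i * v i.
have [A0|Aneq0] := eqVneq A 0.
  have u0 i : u i = 0.
    apply/eqP; rewrite -sqrf_eq0; apply/eqP.
    exact: (psumr_eq0P (fun j _ => sqr_ge0 (u j)) A0).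
  have -> : C = 0 by rewrite /C big1 // => i _; rewrite u0 mul0r.
  by rewrite expr0n /= mulr_ge0 ?sum_sqr_ge0.
have A_gt0 : 0 < A by rewrite lt_def Aneq0 sum_sqr_ge0.
have expand t : \sum_(i < k) (t * u i + v i) ^+ 2 = t ^+ 2 * A + 2 * t * C + B.
  rewrite /A /B /C !mulr_sumr -!big_split /=.
  by apply: eq_bigr => i _; ring.
(* evaluate the nonnegative quadratic [expand] at its minimiser [- C / A] *)
have := @sum_sqr_ge0 k (fun i => - C / A * u i + v i).
rewrite expand.
have -> : (- C / A) ^+ 2 * A + 2 * (- C / A) * C + B = B - C ^+ 2 / A.
  by field; rewrite Aneq0.
by rewrite subr_ge0 ler_pdivrMr // mulrC.
Qed.

Lemma enorm_ge0 k (v : 'rV[R]_k) : 0 <= enorm v.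
Proof. exact: sqrtr_ge0. Qed.

Lemma enormN k (v : 'rV[R]_k) : enorm (- v) = enorm v.
Proof. by rewrite /enorm; congr Num.sqrt; apply: eq_bigr => i _; rewrite mxE sqrrN. Qed.

Lemma enormD k (u v : 'rV[R]_k) : enorm (u + v) <= enorm u + enorm v.
Proof.
rewrite /enorm.
set A := \sum_(i < k) u ord0 i ^+ 2; set B := \sum_(i < k) v ord0 i ^+ 2.
set C := \sum_(i < k) u ord0 i * v ord0 i.
have [A0 B0] : 0 <= A /\ 0 <= B by split; exact: sum_sqr_ge0.
have CAB : C <= Num.sqrt A * Num.sqrt B.
  rewrite -sqrtrM // (le_trans (ler_norm C)) // -sqrtr_sqr ler_sqrt ?mulr_ge0 //.
  exact: cauchy_schwarz_sum.
have -> : \sum_(i < k) (u + v) ord0 i ^+ 2 = A + 2 * C + B.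
  rewrite /A /B /C mulr_sumr -!big_split /=.
  by apply: eq_bigr => i _; rewrite mxE; ring.
rewrite -[leRHS]ger0_norm ?addr_ge0 ?sqrtr_ge0 // -sqrtr_sqr ler_sqrt ?sqr_ge0 //.
by rewrite sqrrD !sqr_sqrtr //; lra.
Qed.

Lemma enorm_le_coord k (v : 'rV[R]_k) (c : R) : 0 <= c ->
  (forall i, `|v ord0 i| <= c) -> enorm v <= Num.sqrt k%:R * c.
Proof.
move=> c0 vc; rewrite /enorm -[c in leRHS]ger0_norm // -sqrtr_sqr -sqrtrM ?ler0n //.
rewrite ler_sqrt ?mulr_ge0 ?ler0n ?sqr_ge0 // mulr_natl -[k in _ *+ k]card_ord -sumr_const.
apply: ler_sum => i _.
by rewrite -real_normK ?num_real // lerXn2r // ?nnegrE // (le_trans (vc i)).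
Qed.

Lemma enorm_le_mx_norm k (v : 'rV[R]_k) : enorm v <= Num.sqrt k%:R * `|v|.
Proof.
apply: enorm_le_coord => // i; rewrite [leRHS]mx_normrE.
exact: (le_bigmax _ _ (ord0, i)).
Qed.

End euclidean_norm.

Section nearest_anchor.
Variables (R : realType) (d m K : nat) (Pset : set 'rV[R]_d) (anc : 'I_K -> 'rV[R]_d).
Variable idx : 'rV[R]_d -> 'I_K.
Hypothesis anc_in : forall i, Pset (anc i).
Hypothesis idx_nearest :
  forall p, Pset p -> forall i, enorm (p - anc (idx p)) <= enorm (p - anc i).

Let anchor_dists p := [set enorm (p - anc i) | i in [set: 'I_K]].

Let anchor_dists_lb p : has_lbound (anchor_dists p).
Proof. by exists 0 => _ [i _ <-]; exact: enorm_ge0. Qed.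

Lemma nearest_anchor_le_fill_distance p : compact Pset -> Pset p ->
  enorm (p - anc (idx p)) <= fill_distance Pset anc.
Proof.
move=> /compact_bounded[M [_ PM]] Pp.
have dist_inf : enorm (p - anc (idx p)) <= inf (anchor_dists p).
  apply: lb_le_inf; first by exists (enorm (p - anc (idx p))), (idx p).
  by move=> _ [i _ <-]; exact: idx_nearest.
apply: (le_trans dist_inf); apply: ub_le_sup; last by exists p.
pose a := anc (idx p).
exists (Num.sqrt d%:R * (M + 1 + `|a|)) => _ [q Pq <-].
have qa : anchor_dists q (enorm (q - a)) by exists (idx p).
apply: le_trans (ge_inf (anchor_dists_lb q) qa) _.
apply: le_trans (enorm_le_mx_norm _) _; rewrite ler_wpM2l ?sqrtr_ge0 //.
by rewrite (le_trans (ler_normB _ _)) // lerD2r PM // ltrDl.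
Qed.

Lemma fill_distance_le (r : R) : Pset !=set0 ->
  (forall p, Pset p -> enorm (p - anc (idx p)) <= r) -> fill_distance Pset anc <= r.
Proof.
move=> [p Pp] pr; apply: sup_le_ub; first by exists (inf (anchor_dists p)), p.
move=> _ [q Pq <-]; apply: le_trans (pr q Pq).
by apply: ge_inf; [exact: anchor_dists_lb | exists (idx q)].
Qed.

Lemma lipschitz_nearest_anchor_le (f : 'rV[R]_d -> 'rV[R]_m) (L : R) p :
  compact Pset -> (0 < K)%N ->
  (forall p q, Pset p -> Pset q -> enorm (f p - f q) <= L * enorm (p - q)) ->
  Pset p -> enorm (f (anc (idx p)) - f p) <= L * fill_distance Pset anc.
Proof.
move=> cP K_gt0 f_lip Pp.
have bias : enorm (f (anc (idx p)) - f p) <= L * enorm (p - anc (idx p)).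
  by rewrite -opprB enormN f_lip.
have [L0|L_lt0] := leP 0 L.
  by rewrite (le_trans bias) // ler_wpM2l // nearest_anchor_le_fill_distance.
(* a negative Lipschitz constant forces every point of [Pset] onto its anchor *)
have on_anchor q : Pset q -> enorm (q - anc (idx q)) <= 0.
  move=> Pq; rewrite -(nmulr_rge0 _ L_lt0).
  exact: le_trans (enorm_ge0 _) (f_lip _ _ Pq (anc_in _)).
have fill_le0 : fill_distance Pset anc <= 0.
  by apply: fill_distance_le on_anchor; exists (anc (Ordinal K_gt0)).
have dist0 : enorm (p - anc (idx p)) = 0 by apply/le_anti; rewrite on_anchor ?enorm_ge0.
by rewrite (le_trans bias) // dist0 mulr0 nmulr_rge0.
Qed.

End nearest_anchor.

Lemma measurable_preimageT d d' (T : measurableType d) (U : measurableType d')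
    (f : T -> U) (B : set U) :
  measurable_fun setT f -> measurable B -> measurable (f @^-1` B).
Proof. by move=> mf mB; rewrite -[_ @^-1` _]setTI; exact: mf. Qed.

Lemma measurable_gt_fun d (T : measurableType d) (R : realType) (f : T -> R) (a : R) :
  measurable_fun setT f -> measurable [set w | a < f w].
Proof.
move=> mf; rewrite [X in measurable X](_ : _ = f @^-1` `]a, +oo[).
  exact: measurable_preimageT mf (measurable_itv _).
by apply/seteqP; split => w /=; rewrite in_itv /= andbT.
Qed.

Lemma measurable_indic_comp d (T : measurableType d) dY (Y : measurableType dY)
    (R : realType) (X : T -> Y) (A : set Y) :
  measurable_fun setT X -> measurable A -> measurable_fun setT (fun w => (\1_A (X w) : R)).
Proof. by move=> mX mA; exact: measurableT_comp (measurable_indic (D := setT) mA) mX. Qed.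

Lemma Boole_inequality_fin d (T : measurableType d) (R : realType)
    (mu : {measure set T -> \bar R}) (I : finType) (F : I -> set T) :
  (forall i, measurable (F i)) ->
  (mu (\big[setU/set0]_i F i) <= \sum_i mu (F i))%E.
Proof.
move=> mF; suff : measurable (\big[setU/set0]_i F i) /\
    (mu (\big[setU/set0]_i F i) <= \sum_i mu (F i))%E by case.
apply: (big_rec2 (fun U s => measurable U /\ (mu U <= s)%E)).
  by rewrite measure0.
move=> i U s _ [mU muU]; split; first exact: measurableU.
by apply: le_trans (measureU2 _ _ _) _ => //; exact: leeD2l.
Qed.

Import HBNNSimple.

Section integral_comp_mul.
Context d (T : measurableType d) dY (Y : measurableType dY) (R : realType).
Variables (mu : {measure set T -> \bar R}) (X : T -> Y) (G : T -> R).
Hypotheses (mX : measurable_fun setT X) (G_ge0 : forall w, 0 <= G w)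
  (mG : measurable_fun setT G).

Lemma integral_nnsfun_comp_mul (h : {nnsfun Y >-> R}) :
  (\int[mu]_w (h (X w) * G w)%:E =
   \sum_(r \in range h) (r%:E * \int[mu]_w (\1_(h @^-1` [set r]) (X w) * G w)%:E))%E.
Proof.
under eq_integral do rewrite fimfunE mulrC fsbig_distrr //= -fsumEFin //.
rewrite ge0_integral_fsum //; last 2 first.
- move=> r; apply/measurable_EFinP; apply: measurable_funM => //.
  by apply: measurable_funM => //; exact: measurable_indic_comp.
- move=> r w _; rewrite EFinM; apply: mule_ge0; first by rewrite lee_fin.
  by rewrite EFinM; exact: nnfun_muleindic_ge0.
apply: eq_fsbigr => r /set_mem [y _ <-].
rewrite -ge0_integralZl_EFin //.
- by apply: eq_integral => w _; rewrite -EFinM; congr (_%:E); ring.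
- by move=> w _; rewrite lee_fin mulr_ge0 // indicE ler0n.
- by apply/measurable_EFinP; apply: measurable_funM => //; exact: measurable_indic_comp.
Qed.

Lemma integral_comp_mul_approx (f : Y -> R) (f_ge0 : forall y, 0 <= f y)
    (mf : measurable_fun setT (EFin \o f)) :
  (\int[mu]_w (f (X w) * G w)%:E =
   limn (fun k => \int[mu]_w (nnsfun_approx measurableT mf k (X w) * G w)%:E))%E.
Proof.
rewrite -monotone_convergence //; last 3 first.
- move=> k; apply/measurable_EFinP; apply: measurable_funM => //.
  exact: measurableT_comp (measurable_funP _) mX.
- by move=> k w _; rewrite lee_fin mulr_ge0.
- by move=> w _ a b ab; rewrite lee_fin ler_wpM2r //; exact/lefP/nd_nnsfun_approx.
apply: eq_integral => w _; apply/esym/cvg_lim => //.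
under eq_fun do rewrite EFinM.
rewrite EFinM; apply: cvgeZr => //.
exact: (@cvg_nnsfun_approx _ _ _ _ measurableT _ mf (fun y _ => f_ge0 y) (X w) I).
Qed.

End integral_comp_mul.

(* From indicators to nonnegative functions, through simple functions and
   monotone convergence. *)
Lemma eq_integral_comp_mul d (T : measurableType d) dY (Y : measurableType dY)
    (R : realType) (mu : {measure set T -> \bar R}) (X : T -> Y) (G1 G2 : T -> R) :
  measurable_fun setT X ->
  (forall w, 0 <= G1 w) -> measurable_fun setT G1 ->
  (forall w, 0 <= G2 w) -> measurable_fun setT G2 ->
  (forall A, measurable A ->
     \int[mu]_w (\1_A (X w) * G1 w)%:E = \int[mu]_w (\1_A (X w) * G2 w)%:E)%E ->
  forall f : Y -> R, (forall y, 0 <= f y) -> measurable_fun setT f ->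
  (\int[mu]_w (f (X w) * G1 w)%:E = \int[mu]_w (f (X w) * G2 w)%:E)%E.
Proof.
move=> mX G1_ge0 mG1 G2_ge0 mG2 G12 f f_ge0 /measurable_EFinP mf.
rewrite !(integral_comp_mul_approx _ _ _ _ f_ge0 mf) //.
congr (limn _); apply/funext => k.
by rewrite !integral_nnsfun_comp_mul //; apply: eq_fsbigr => r _; rewrite G12.
Qed.

Lemma integral_comp_mul_cst d (T : measurableType d) dY (Y : measurableType dY)
    (R : realType) (mu : {measure set T -> \bar R}) (X : T -> Y) (G : T -> R) (c : R) :
  measurable_fun setT X -> (forall w, 0 <= G w) -> measurable_fun setT G -> 0 <= c ->
  (forall A, measurable A ->
     \int[mu]_w (\1_A (X w) * G w)%:E = mu (X @^-1` A) * c%:E)%E ->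
  forall f : Y -> R, (forall y, 0 <= f y) -> measurable_fun setT f ->
  (\int[mu]_w (f (X w) * G w)%:E = \int[mu]_w (f (X w))%:E * c%:E)%E.
Proof.
move=> mX G_ge0 mG c_ge0 indic_G f f_ge0 mf.
have pull_cst (g : T -> R) : (forall w, 0 <= g w) -> measurable_fun setT g ->
    (\int[mu]_w (g w * c)%:E = \int[mu]_w (g w)%:E * c%:E)%E.
  move=> g_ge0 mg; under eq_integral do rewrite EFinM.
  by rewrite ge0_integralZr // => [|w _]; [exact/measurable_EFinP | rewrite lee_fin].
have indic_cst A : measurable A ->
    (\int[mu]_w (\1_A (X w) * G w)%:E = \int[mu]_w (\1_A (X w) * c)%:E)%E.
  move=> mA; have mIA := measurable_indic_comp (R := R) mX mA.
  rewrite indic_G // pull_cst // integral_indic ?setIT //.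
  exact: measurable_preimageT.
rewrite (eq_integral_comp_mul mX G_ge0 mG (fun=> c_ge0) (measurable_cst c) indic_cst f_ge0 mf).
by rewrite pull_cst //; exact: measurableT_comp mf mX.
Qed.

Lemma measurable_prod_set d (T : measurableType d) (R : realType) (I : finType)
    (S : {set I}) (F : I -> T -> R) :
  (forall c, measurable_fun setT (F c)) ->
  measurable_fun setT (fun w => \prod_(c in S) F c w).
Proof. by move=> mF; under eq_fun do rewrite -big_enum; exact: measurable_prod. Qed.

Section independent_product.
Context d (T : measurableType d) (R : realType) (P : probability T R) (I : finType)
  dY (Y : measurableType dY) (X : I -> T -> Y).
Hypothesis mX : forall a, measurable_fun setT (X a).
Hypothesis X_indep : forall (J : {set I}) (B : I -> set Y), (forall a, measurable (B a)) ->
  P (\big[setI/setT]_(a in J) (X a @^-1` B a)) = (\prod_(a in J) P (X a @^-1` B a))%E.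
Variable phi : I -> Y -> R.
Hypotheses (phi_ge0 : forall a y, 0 <= phi a y)
  (mphi : forall a, measurable_fun setT (phi a)).
Hypothesis phi_fin : forall a, (\int[P]_w (phi a (X a w))%:E)%E \is a fin_num.

Let mphiX a : measurable_fun setT (fun w => phi a (X a w)).
Proof. exact: measurableT_comp (mphi a) (mX a). Qed.

Lemma prod_indic_preimage (K : {set I}) (B : I -> set Y) w :
  \prod_(c in K) \1_(B c) (X c w) = \1_(\big[setI/setT]_(c in K) X c @^-1` B c) w :> R.
Proof.
apply: (big_rec2 (fun x y => x = \1_y w)); first by rewrite indicT.
by move=> c r U _ ->; rewrite indicI.
Qed.

Lemma integral_prod_indic (K : {set I}) (B : I -> set Y) : (forall a, measurable (B a)) ->
  (\int[P]_w (\prod_(c in K) \1_(B c) (X c w))%:E = \prod_(c in K) P (X c @^-1` B c))%E.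
Proof.
move=> mB; under eq_integral do rewrite prod_indic_preimage.
rewrite integral_indic ?setIT //; first exact: X_indep.
by apply: bigsetI_measurable => a _; exact: measurable_preimageT.
Qed.

(* Induction on [#|J|], moving one factor [phi b (X b)] at a time into the
   indicator part [K], where the independence hypothesis applies directly. *)
Lemma integral_prod_indic_indep (J K : {set I}) (B : I -> set Y) :
  {in K, forall c, c \notin J} -> (forall a, measurable (B a)) ->
  (\int[P]_w ((\prod_(a in J) phi a (X a w)) * \prod_(c in K) \1_(B c) (X c w))%:E =
   (\prod_(a in J) \int[P]_w (phi a (X a w))%:E) * \prod_(c in K) P (X c @^-1` B c))%E.
Proof.
move: {2}#|J| (erefl #|J|) => N; elim: N J K B => [|N IH] J K B cardJ JK mB.
  rewrite (cards0_eq cardJ) !big_set0 mul1e -integral_prod_indic //.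
  by under eq_integral do rewrite big_set0 mul1r.
have [b bJ] : exists b, b \in J by apply/card_gt0P; rewrite cardJ.
have cardJb : #|J :\ b| = N by move: cardJ; rewrite (cardsD1 b J) bJ => -[].
have bK : b \notin K by apply/negP => /JK; rewrite bJ.
have JbK : {in b |: K, forall c, c \notin J :\ b}.
  move=> c; rewrite !inE => /orP[/eqP->|/JK cJ]; first by rewrite eqxx.
  by rewrite (negbTE cJ) andbF.
rewrite (big_setD1 b bJ) /=.
under eq_integral do rewrite (big_setD1 b bJ) /= -mulrA.
pose G w := (\prod_(a in J :\ b) phi a (X a w)) * \prod_(c in K) \1_(B c) (X c w).
have G_ge0 w : 0 <= G w.
  by rewrite mulr_ge0 // prodr_ge0 // => c _; rewrite indicE ler0n.
have mG : measurable_fun setT G.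
  apply: measurable_funM; apply: measurable_prod_set => c; first exact: mphiX.
  exact: measurable_indic_comp.
pose c0 := ((\prod_(a in J :\ b) \int[P]_w (phi a (X a w))%:E) *
            \prod_(c in K) P (X c @^-1` B c))%E.
have c0_fin : c0 \is a fin_num.
  rewrite fin_numM // prode_fin_num // => c _.
  by apply: fin_num_measure; exact: measurable_preimageT.
have c0_ge0 : (0 <= c0)%E.
  apply: mule_ge0; apply: prode_ge0 => c _; last exact: measure_ge0.
  by apply: integral_ge0 => w _; rewrite lee_fin.
have indic_G A : measurable A ->
    (\int[P]_w (\1_A (X b w) * G w)%:E = P (X b @^-1` A) * (fine c0)%:E)%E.
  move=> mA; pose B' c := if c == b then A else B c.
  have mB' c : measurable (B' c) by rewrite /B'; case: ifP.
  have B'K : {in K, B' =1 B}.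
    by move=> c cK; rewrite /B'; case: eqP => // cb; rewrite -cb cK in bK.
  transitivity (\int[P]_w ((\prod_(a in J :\ b) phi a (X a w)) *
                  \prod_(c in b |: K) \1_(B' c) (X c w))%:E)%E.
    apply: eq_integral => w _; rewrite big_setU1 //= /B' eqxx /G mulrCA.
    by congr (_ * (_ * _))%:E; apply: eq_bigr => c cK; rewrite -/(B' c) B'K.
  have PB'K : (\prod_(c in K) P (X c @^-1` B' c) = \prod_(c in K) P (X c @^-1` B c))%E.
    by apply: eq_bigr => c cK; rewrite B'K.
  by rewrite IH // big_setU1 //= PB'K /B' eqxx fineK // muleCA.
rewrite (integral_comp_mul_cst (mX b) G_ge0 mG (fine_ge0 c0_ge0) indic_G) //.
by rewrite fineK // /c0 muleA.
Qed.

Lemma integral_prod_indep (J : {set I}) :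
  (\int[P]_w (\prod_(a in J) phi a (X a w))%:E =
   \prod_(a in J) \int[P]_w (phi a (X a w))%:E)%E.
Proof.
have := @integral_prod_indic_indep J finset.set0 (fun _ => setT) _ (fun _ => measurableT).
rewrite big_set0 mule1 => <-; last by move=> c; rewrite inE.
by apply: eq_integral => w _; rewrite big_set0 mulr1.
Qed.

End independent_product.

Lemma lee_prod (R : realType) (I : Type) (s : seq I) (F G : I -> \bar R) :
  (forall i, (0 <= F i)%E) -> (forall i, (F i <= G i)%E) ->
  (\prod_(i <- s) F i <= \prod_(i <- s) G i)%E.
Proof.
move=> F_ge0 FG; suff : (0 <= \prod_(i <- s) F i)%E /\
    (\prod_(i <- s) F i <= \prod_(i <- s) G i)%E by case.
apply: (big_ind2 (fun x y => (0 <= x)%E /\ (x <= y)%E)) => //.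
by move=> x1 x2 y1 y2 [x1_ge0 x12] [y1_ge0 y12]; split; [exact: mule_ge0 | exact: lee_pmul].
Qed.

Section subgaussian_sum.
Context d (T : measurableType d) (R : realType) (P : probability T R).
Variables (N : nat) (Z : 'I_N -> T -> R) (sig : R).
Hypothesis mZ : forall j, measurable_fun setT (Z j).
Hypothesis Z_mgf : forall lam : R,
  (\int[P]_w (expR (lam * \sum_(j < N) Z j w))%:E =
   \prod_(j < N) \int[P]_w (expR (lam * Z j w))%:E)%E.
Hypothesis Z_subg : forall j, sub_gaussian P sig (Z j).

Let S w := \sum_(j < N) Z j w.

Let mS : measurable_fun setT S.
Proof. exact: measurable_sum. Qed.

Let measurable_S_gt a : measurable [set w | a < S w].
Proof. exact: measurable_gt_fun mS. Qed.

Lemma subgaussian_sum_chernoff (lam a : R) : 0 <= lam ->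
  (P [set w | (a < S w)%R] <= (expR (- (lam * a) + N%:R * (sig ^+ 2 * lam ^+ 2 / 2)))%:E)%E.
Proof.
move=> lam_ge0.
have mexpS : measurable_fun setT (fun w => expR (lam * S w)).
  exact: measurableT_comp (@measurable_expR R) (measurable_funM (measurable_cst _) mS).
rewrite -[X in P X]setIT -integral_indic //.
apply: (@le_trans _ _ (\int[P]_w (expR (- (lam * a)) * expR (lam * S w))%:E)%E).
  apply: ge0_le_integral => //.
  - by apply/measurable_EFinP; exact: measurable_indic.
  - by apply/measurable_EFinP; exact: measurable_funM.
  - move=> w _; rewrite lee_fin -expRD indicE.
    case: (boolP (w \in _)) => [/set_mem /= aS|_]; last exact: expR_ge0.
    rewrite -[1]expR0 ler_expR addrC -mulrBr mulr_ge0 // subr_ge0 ltW //.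
under eq_integral do rewrite EFinM.
rewrite ge0_integralZl ?lee_fin ?expR_ge0 //; last exact/measurable_EFinP.
rewrite Z_mgf expRD EFinM lee_pmul ?lee_fin ?expR_ge0 //.
  by apply: prode_ge0 => j _; apply: integral_ge0 => w _; rewrite lee_fin expR_ge0.
apply: (@le_trans _ _ (\prod_(j < N) (expR (sig ^+ 2 * lam ^+ 2 / 2))%:E)%E).
  apply: lee_prod => j; last exact: Z_subg.
  by apply: integral_ge0 => w _; rewrite lee_fin expR_ge0.
by rewrite prodEFin lee_fin -expR_sum sumr_const card_ord mulr_natl.
Qed.

(* With [sig = 0] Chernoff bounds [P [set w | b < S w]] by [exp (- lam * b)] for
   every [lam], so each event [1 / k.+1 < S] is null and so is their union. *)
Lemma subgaussian0_sum_tail_null a : sig = 0 -> 0 <= a -> P [set w | (a < S w)%R] = 0%E.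
Proof.
move=> sig0 a_ge0.
have null_gt k : P [set w | k.+1%:R^-1 < S w] = 0%E.
  apply/eqP; rewrite eq_le measure_ge0 andbT; apply/lee_addgt0Pr => e e_gt0.
  rewrite add0e; have [e_ge1|e_lt1] := leP 1 e.
    by rewrite (le_trans (probability_le1 _ _)) ?lee_fin.
  have lam_ge0 : 0 <= k.+1%:R * - ln e by rewrite mulr_ge0 // oppr_ge0 ln_le0 // ltW.
  apply: le_trans (subgaussian_sum_chernoff _ lam_ge0) _.
  by rewrite sig0 expr0n /= !mul0r mulr0 addr0 mulrAC mulfV // mul1r opprK lnK.
have cover : [set w | a < S w] `<=` \bigcup_k [set w | k.+1%:R^-1 < S w].
  move=> w /= /(le_lt_trans a_ge0) Sw_gt0; have [k k_lt] := ltr_add_invr Sw_gt0.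
  by exists k => //=; rewrite -[X in X < _]add0r.
apply/eqP; rewrite eq_le measure_ge0 andbT.
apply: le_trans (measure_sigma_subadditive P (fun k => measurable_S_gt _)
  (measurable_S_gt a) cover) _.
by rewrite eseries0 // => k _ _; exact: null_gt.
Qed.

Lemma subgaussian_sum_tail (c l : R) : 0 <= sig -> 0 <= c ->
  2 * sig ^+ 2 * l <= N%:R * c ^+ 2 ->
  (P [set w | (N%:R * c < S w)%R] <= (expR (- l))%:E)%E.
Proof.
move=> sig_ge0 c_ge0 cl.
have [sig0|sig_neq0] := eqVneq sig 0.
  by rewrite subgaussian0_sum_tail_null ?mulr_ge0 // lee_fin expR_ge0.
have sig_gt0 : 0 < sig by rewrite lt_def sig_neq0.
(* the Chernoff exponent is minimised at [lam = c / sig ^ 2] *)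
apply: le_trans (subgaussian_sum_chernoff _ (divr_ge0 c_ge0 (sqr_ge0 sig))) _.
rewrite lee_fin ler_expR.
have -> : - (c / sig ^+ 2 * (N%:R * c)) + N%:R * (sig ^+ 2 * (c / sig ^+ 2) ^+ 2 / 2) =
    - (N%:R * c ^+ 2 / (2 * sig ^+ 2)).
  by field.
by rewrite lerN2 ler_pdivlMr ?mulr_gt0 ?exprn_gt0 // mulrC.
Qed.

End subgaussian_sum.

Lemma subgaussian_sum_abs_tail d (T : measurableType d) (R : realType)
    (P : probability T R) (N : nat) (Z : 'I_N -> T -> R) (sig c l : R) :
  (forall j, measurable_fun setT (Z j)) ->
  (forall lam : R, (\int[P]_w (expR (lam * \sum_(j < N) Z j w))%:E =
     \prod_(j < N) \int[P]_w (expR (lam * Z j w))%:E)%E) ->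
  (forall j, sub_gaussian P sig (Z j)) ->
  0 <= sig -> 0 <= c -> 2 * sig ^+ 2 * l <= N%:R * c ^+ 2 ->
  (P [set w | (N%:R * c < `|\sum_(j < N) Z j w|)%R] <= (expR (- l) *+ 2)%:E)%E.
Proof.
move=> mZ Z_mgf Z_subg sig_ge0 c_ge0 cl.
have mNZ j : measurable_fun setT (fun w => - Z j w) by exact: measurable_funN.
have NZ_mgf lam : (\int[P]_w (expR (lam * \sum_(j < N) - Z j w))%:E =
    \prod_(j < N) \int[P]_w (expR (lam * - Z j w))%:E)%E.
  under eq_integral do rewrite sumrN mulrN -mulNr.
  by rewrite Z_mgf; apply: eq_bigr => j _; apply: eq_integral => w _; rewrite mulrN mulNr.
have NZ_subg j : sub_gaussian P sig (fun w => - Z j w).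
  move=> lam; under eq_integral do rewrite mulrN -mulNr.
  by rewrite -[lam ^+ 2]sqrrN; exact: Z_subg.
have mS (F : 'I_N -> T -> R) : (forall j, measurable_fun setT (F j)) ->
    measurable [set w | N%:R * c < \sum_(j < N) F j w].
  by move=> mF; apply: measurable_gt_fun; exact: measurable_sum.
rewrite [X in P X](_ : _ = [set w | N%:R * c < \sum_(j < N) Z j w] `|`
                          [set w | N%:R * c < \sum_(j < N) - Z j w]); last first.
  by apply/seteqP; split => w /=; rewrite sumrN ltr_normr => /orP.
apply: le_trans (measureU2 _ (mS _ mZ) (mS _ mNZ)) _.
rewrite mulr2n EFinD; apply: leeD.
  exact: (subgaussian_sum_tail mZ Z_mgf Z_subg).
exact: (subgaussian_sum_tail mNZ NZ_mgf NZ_subg).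
Qed.

Lemma tnth_tuple_of_row (R : realType) k (v : 'rV[R]_k) i :
  tnth (tuple_of_row v) i = v ord0 i.
Proof. exact: tnth_mktuple. Qed.

Lemma measurable_tuple_of_row d (T : measurableType d) (R : realType) k
    (X : T -> 'rV[R]_k) :
  (forall q, measurable_fun setT (fun w => X w ord0 q)) ->
  measurable_fun setT (fun w => tuple_of_row (X w)).
Proof.
move=> mX; apply/measurable_fun_tnthP => q.
rewrite [X in measurable_fun _ X](_ : _ = fun w => X w ord0 q) //.
by apply/funext => w; rewrite /= tnth_tuple_of_row.
Qed.

Lemma integral_expR_sum_indep d (T : measurableType d) (R : realType)
    (P : probability T R) (I : finType) k (X : I -> T -> 'rV[R]_k) (J : {set I})
    (q : 'I_k) (lam : R) :
  mutually_independent P X ->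
  (forall a q, measurable_fun setT (fun w => X a w ord0 q)) ->
  (forall a, (\int[P]_w (expR (lam * X a w ord0 q))%:E < +oo)%E) ->
  (\int[P]_w (expR (lam * \sum_(a in J) X a w ord0 q))%:E =
   \prod_(a in J) \int[P]_w (expR (lam * X a w ord0 q))%:E)%E.
Proof.
move=> X_indep mX X_fin.
pose phi (a : I) (v : k.-tuple R) := expR (lam * tnth v q).
have phiX a w : phi a (tuple_of_row (X a w)) = expR (lam * X a w ord0 q).
  by rewrite /phi tnth_tuple_of_row.
have mphi a : measurable_fun setT (phi a).
  exact: measurableT_comp (@measurable_expR R)
    (measurable_funM (measurable_cst _) (measurable_tnth q)).
have phi_fin a : (\int[P]_w (phi a (tuple_of_row (X a w)))%:E)%E \is a fin_num.
  rewrite ge0_fin_numE; last by apply: integral_ge0 => w _; rewrite lee_fin expR_ge0.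
  by under eq_integral do rewrite phiX; exact: X_fin.
have prod_eq := integral_prod_indep (fun a => measurable_tuple_of_row (mX a)) X_indep
  (fun a y => expR_ge0 _) mphi phi_fin J.
transitivity (\int[P]_w (\prod_(a in J) phi a (tuple_of_row (X a w)))%:E)%E.
  apply: eq_integral => w _; rewrite mulr_sumr expR_sum.
  by congr (_%:E); apply: eq_bigr => a _; rewrite phiX.
rewrite prod_eq; apply: eq_bigr => a _.
by apply: eq_integral => w _; rewrite tnth_tuple_of_row.
Qed.

Lemma subgaussian_mgf_lty d (T : measurableType d) (R : realType) (P : probability T R)
    (sig : R) (X : T -> R) (lam : R) :
  sub_gaussian P sig X -> (\int[P]_w (expR (lam * X w))%:E < +oo)%E.
Proof. by move=> X_subg; exact: le_lt_trans (X_subg lam) (ltry _). Qed.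

Lemma nmin_le (K : nat) (n : 'I_K -> nat) i : (nmin n <= n i)%N.
Proof. by rewrite /nmin -minEnat; exact: (@bigmin_le _ nat _ _ i n). Qed.

Lemma nmin_gt0 (K : nat) (n : 'I_K -> nat) :
  (0 < K)%N -> (forall i, 0 < n i)%N -> (0 < nmin n)%N.
Proof.
move=> K_gt0 n_gt0; apply: (big_ind (fun v => 0 < v)%N) => [|x y x_gt0 y_gt0|i _].
- exact: leq_trans (n_gt0 (Ordinal K_gt0)) (leq_bigmax _).
- by rewrite leq_min x_gt0 y_gt0.
- exact: n_gt0.
Qed.

Lemma sigma_max_ge (R : realType) (K : nat) (sigma : 'I_K -> R) i :
  sigma i <= sigma_max sigma.
Proof. exact: le_bigmax. Qed.

Lemma sigma_max_ge0 (R : realType) (K : nat) (sigma : 'I_K -> R) : 0 <= sigma_max sigma.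
Proof. exact: bigmax_ge_id. Qed.

Lemma le_sqr_deviation_bound (R : realType) (s S l : R) (N0 N : nat) :
  0 <= s <= S -> (0 < N0 <= N)%N -> 0 <= l ->
  2 * s ^+ 2 * l <= N%:R * (S * Num.sqrt (2 * l / N0%:R)) ^+ 2.
Proof.
move=> /andP[s_ge0 sS] /andP[N0_gt0 N0N] l_ge0.
have N0_gt0' : 0 < N0%:R :> R by rewrite ltr0n.
rewrite exprMn sqr_sqrtr ?divr_ge0 ?mulr_ge0 ?ler0n //.
apply: (@le_trans _ _ (N0%:R * (S ^+ 2 * (2 * l / N0%:R)))); last first.
  by rewrite ler_wpM2r ?ler_nat // mulr_ge0 ?sqr_ge0 // divr_ge0 ?mulr_ge0 ?ler0n.
have -> : N0%:R * (S ^+ 2 * (2 * l / N0%:R)) = 2 * S ^+ 2 * l.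
  by field; rewrite gt_eqF.
by rewrite ler_wpM2r // ler_wpM2l // lerXn2r ?nnegrE // (le_trans s_ge0).
Qed.

Lemma mean_shiftr (F : numFieldType) (V : lmodType F) (N : nat) (f : V) (e : 'I_N -> V) :
  (0 < N)%N ->
  N%:R^-1 *: \sum_(j < N) (f + e j) - f = N%:R^-1 *: \sum_(j < N) e j.
Proof.
move=> N_gt0; rewrite big_split /= sumr_const card_ord -[f *+ N]scaler_nat scalerDr scalerA.
by rewrite mulVf ?pnatr_eq0 -?lt0n // scale1r addrAC subrr add0r.
Qed.

Section anchor_noise.
Context dom (Omega : measurableType dom) (R : realType) (Pr : probability Omega R).
Variables (K m : nat) (n : 'I_K -> nat) (sigma : 'I_K -> R).
Variable eps : forall i : 'I_K, 'I_(n i) -> Omega -> 'rV[R]_m.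
Arguments eps : clear implicits.
Hypotheses (n_gt0 : forall i, (0 < n i)%N) (sigma_ge0 : forall i, 0 <= sigma i).
Hypothesis eps_indep :
  mutually_independent Pr (fun a : {i : 'I_K & 'I_(n i)} => eps (tag a) (tagged a)).
Hypothesis eps_meas : forall i j k, measurable_fun setT (fun w => eps i j w ord0 k).
Hypothesis eps_subg : forall i j k, sub_gaussian Pr (sigma i) (fun w => eps i j w ord0 k).

Lemma noise_sum_mgf i k (lam : R) :
  (\int[Pr]_w (expR (lam * \sum_(j < n i) eps i j w ord0 k))%:E =
   \prod_(j < n i) \int[Pr]_w (expR (lam * eps i j w ord0 k))%:E)%E.
Proof.
pose tg (j : 'I_(n i)) : {i : 'I_K & 'I_(n i)} := Tagged (fun i => 'I_(n i)) j.
have tg_inj : injective tg.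
  by move=> j1 j2 /(congr1 (tagged_as (tg j1))); rewrite !tagged_asE.
have sum_tg w : \sum_(a in (tg @: [set: 'I_(n i)])%SET) eps (tag a) (tagged a) w ord0 k =
    \sum_(j < n i) eps i j w ord0 k.
  by rewrite big_imset; [apply: eq_big => // j; rewrite inE | exact: in2W tg_inj].
have := integral_expR_sum_indep (tg @: [set: 'I_(n i)])%SET (q := k) (lam := lam)
  eps_indep (fun a => @eps_meas (tag a) (tagged a))
  (fun a => subgaussian_mgf_lty lam (@eps_subg (tag a) (tagged a) k)).
under eq_integral do rewrite sum_tg.
rewrite big_imset; last exact: in2W tg_inj.
by move=> ->; apply: eq_big => // j; rewrite inE.
Qed.

Lemma noise_sum_abs_tail i k (c l : R) : 0 <= c ->
  2 * sigma i ^+ 2 * l <= (n i)%:R * c ^+ 2 ->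
  (Pr [set w | ((n i)%:R * c < `|\sum_(j < n i) eps i j w ord0 k|)%R] <=
   (expR (- l) *+ 2)%:E)%E.
Proof.
exact: subgaussian_sum_abs_tail (fun j => @eps_meas i j k) (noise_sum_mgf i k)
  (fun j => @eps_subg i j k) (sigma_ge0 i).
Qed.

(* [l] is chosen so that each of the [m K] deviation events has probability at
   most [2 exp (- l) = delta / (m K)]; a union bound concludes. *)
Lemma noise_mean_uniform_bound (delta : R) : (0 < K)%N -> 0 < delta < 1 ->
  exists E : set Omega, measurable E /\ ((1 - delta)%:E <= Pr E)%E /\
    forall w, E w -> forall i k,
      `|(n i)%:R^-1 * \sum_(j < n i) eps i j w ord0 k| <=
      sigma_max sigma * Num.sqrt (2 * ln (2 * m%:R * K%:R / delta) / (nmin n)%:R).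
Proof.
move=> K_gt0 /andP[delta_gt0 delta_lt1].
set l := ln _; set c := sigma_max sigma * _.
have c_ge0 : 0 <= c by rewrite mulr_ge0 ?sqrtr_ge0 ?sigma_max_ge0.
pose bad (ik : 'I_K * 'I_m) :=
  [set w | (n ik.1)%:R * c < `|\sum_(j < n ik.1) eps ik.1 j w ord0 ik.2|].
have bad_meas ik : measurable (bad ik).
  apply: measurable_gt_fun; apply: measurableT_comp => //.
  by apply: measurable_sum => j; exact: eps_meas.
have bad_prob ik : (Pr (bad ik) <= (delta / (m%:R * K%:R))%:E)%E.
  case: ik => i k; have m_gt0 : (0 < m)%N by exact: leq_ltn_trans (ltn_ord k).
  have mK_gt0 : 0 < m%:R * K%:R :> R by rewrite mulr_gt0 ?ltr0n.
  have l_ge0 : 0 <= l.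
    apply: ln_ge0; rewrite ler_pdivlMr // mul1r (le_trans (ltW delta_lt1)) //.
    by rewrite -!natrM ler1n !muln_gt0 m_gt0 K_gt0.
  apply: le_trans (noise_sum_abs_tail (i := i) k (l := l) c_ge0 _) _.
    rewrite le_sqr_deviation_bound ?sigma_ge0 ?sigma_max_ge ?nmin_gt0 ?nmin_le //.
  have -> : expR (- l) = delta / (2 * m%:R * K%:R).
    by rewrite expRN lnK ?invf_div // posrE divr_gt0 // -mulrA mulr_gt0.
  rewrite lee_fin -mulr_natr [leLHS](_ : _ = delta / (m%:R * K%:R)) //.
  by field; rewrite !pnatr_eq0 -!lt0n K_gt0 m_gt0.
pose U := \big[setU/set0]_ik bad ik.
have U_meas : measurable U by exact: bigsetU_measurable.
have U_prob : (Pr U <= delta%:E)%E.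
  apply: le_trans (Boole_inequality_fin _ bad_meas) _.
  apply: (@le_trans _ _ (\sum_(ik : 'I_K * 'I_m) (delta / (m%:R * K%:R))%:E)%E).
    by apply: lee_sum => ik _; exact: bad_prob.
  rewrite sumEFin lee_fin sumr_const card_prod !card_ord.
  have [->|m_gt0] := posnP m; first by rewrite muln0 mulr0n ltW.
  by rewrite -[_ *+ _]mulr_natr natrM [K%:R * _]mulrC divfK // mulf_neq0 // pnatr_eq0 -lt0n.
exists (~` U); split; first exact: measurableC.
split; first by rewrite probability_setC // EFinB leeB.
move=> w Uw i k; have : ~ bad (i, k) w.
  by move=> bw; apply: Uw; rewrite /U (bigD1 (i, k)) //; left.
move/negP; rewrite -leNgt /= => sum_le.
by rewrite normrM normfV normr_nat ler_pdivrMl ?ltr0n.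
Qed.

End anchor_noise.

Theorem theoremA6 (R : realType) (d m K : nat) (Z Tm : Type)
  (fstar : Z -> 'rV[R]_d -> Tm -> 'rV[R]_m)
  (Pset : set 'rV[R]_d) (anc : 'I_K -> 'rV[R]_d) (idx : 'rV[R]_d -> 'I_K)
  (z : Z) (t : Tm) (L : R)
  (dom : measure_display) (Omega : measurableType dom) (Pr : probability Omega R)
  (n : 'I_K -> nat) (sigma : 'I_K -> R)
  (eps : forall i : 'I_K, 'I_(n i) -> Omega -> 'rV[R]_m)
  (fhat : Z -> 'rV[R]_d -> Tm -> Omega -> 'rV[R]_m)
  (delta : R) :
  compact Pset ->
  (0 < K)%N ->
  (forall i, Pset (anc i)) ->
  (forall p, Pset p -> forall i, enorm (p - anc (idx p)) <= enorm (p - anc i)) ->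
  (* (i) Lipschitz in p *)
  (forall (z' : Z) (t' : Tm) p p', Pset p -> Pset p' ->
     enorm (fstar z' p t' - fstar z' p' t') <= L * enorm (p - p')) ->
  (* (ii) nearest-anchor predictor *)
  (forall p w, Pset p -> fhat z p t w = fhat z (anc (idx p)) t w) ->
  (* (iii) noisy observations averaged at each anchor *)
  (forall i, (0 < n i)%N) ->
  (forall i, 0 <= sigma i) ->
  mutually_independent Pr (fun a : {i : 'I_K & 'I_(n i)} => eps (tag a) (tagged a)) ->
  (forall i j k, measurable_fun setT (fun w => eps i j w ord0 k)) ->
  (forall i j k, mean_zero Pr (fun w => eps i j w ord0 k)) ->
  (forall i j k, sub_gaussian Pr (sigma i) (fun w => eps i j w ord0 k)) ->
  (forall i w, fhat z (anc i) t w =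
     (n i)%:R^-1 *: \sum_(j < n i) (fstar z (anc i) t + eps i j w)) ->
  0 < delta < 1 ->
  exists E : set Omega, measurable E /\ ((1 - delta)%:E <= Pr E)%E /\
    forall w, E w ->
      (ereal_sup [set (enorm (fhat z p t w - fstar z p t))%:E | p in Pset] <=
       (sigma_max sigma *
          Num.sqrt (2 * m%:R * ln (2 * m%:R * K%:R / delta) / (nmin n)%:R)
        + L * fill_distance Pset anc)%:E)%E.
Proof.
move=> cP K_gt0 anc_in idx_nearest f_lip fhat_nearest n_gt0 sigma_ge0 eps_indep eps_meas
  _ eps_subg fhat_avg delta01.
have [E [E_meas [E_prob E_noise]]] :=
  noise_mean_uniform_bound n_gt0 sigma_ge0 eps_indep eps_meas eps_subg K_gt0 delta01.
exists E; split=> //; split=> // w Ew.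
apply: ge_ereal_sup => _ [p Pp <-]; rewrite lee_fin.
set c := sigma_max sigma * _ in E_noise *.
have -> : sigma_max sigma * Num.sqrt (2 * m%:R * ln (2 * m%:R * K%:R / delta) / (nmin n)%:R)
    = Num.sqrt m%:R * c.
  by rewrite /c mulrCA -sqrtrM ?ler0n //; congr (_ * Num.sqrt _); ring.
set i := idx p; rewrite fhat_nearest //.
have -> : fhat z (anc i) t w - fstar z p t =
    (fhat z (anc i) t w - fstar z (anc i) t) + (fstar z (anc i) t - fstar z p t).
  by rewrite addrA subrK.
apply: le_trans (enormD _ _) (lerD _ _).
  apply: enorm_le_coord => [|k]; first by rewrite mulr_ge0 ?sigma_max_ge0 ?sqrtr_ge0.
  by rewrite fhat_avg mean_shiftr // !mxE summxE; exact: E_noise.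
apply: (lipschitz_nearest_anchor_le anc_in idx_nearest (f := fun q => fstar z q t)) => //.
by move=> q q' Pq Pq'; exact: f_lip.
Qed.
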